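(* Let $\mathcal{A}$ and $\mathcal{B}$ be unital $C^*$-algebras with units denoted $I$, let $\Phi:\mathcal{A}\to\mathcal{B}$ be a unital positive linear map, and let $A\in\mathcal{A}$ and $\alpha,\beta\in\mathbb{C}$ be such that $\Phi(C_{\alpha,\beta}(A))$ is accretive, where $C_{\alpha,\beta}(A)=(A-\alpha I)^*(\beta I-A)$. Then \[ \Phi(A^*A)-\Phi(A)^*\Phi(A)\leq \tfrac14|\beta-\alpha|^2I-\Phi({\rm Re}\,C_{\alpha,\beta}(A))\leq \tfrac14|\beta-\alpha|^2 I. \]
   Context: An element $S$ is accretive if ${\rm Re}\,S=(S+S^* )/2\geq 0$. *)

From mathcomp Require Import all_boot all_algebra.
From mathcomp Require Import reals complex.
Import GRing.Theory Num.Theory.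
Local Open Scope ring_scope.

Set Implicit Arguments.
Unset Strict Implicit.
Unset Printing Implicit Defensive.

Record cstar_algebra (R : realType) (A : algType R[i])
    (star : A -> A) (nrm : A -> R) : Prop := CstarAlgebra {
  star_add : forall x y, star (x + y) = star x + star y;
  star_scale : forall (c : R[i]) x, star (c *: x) = c^* *: star x;
  star_mul : forall x y, star (x * y) = star y * star x;
  star_invol : forall x, star (star x) = x;
  nrm_eq0 : forall x, nrm x = 0 -> x = 0;
  nrm_triangle : forall x y, nrm (x + y) <= nrm x + nrm y;
  nrm_scale : forall (c : R[i]) x, ((nrm (c *: x))%:C)%C = `|c| * ((nrm x)%:C)%C;
  nrm_submul : forall x y, nrm (x * y) <= nrm x * nrm y;
  nrm_cstar : forall x, nrm (star x * x) = nrm x ^+ 2;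
  nrm_complete : forall u : nat -> A,
    (forall e : R, 0 < e -> exists N, forall m n, (N <= m)%N -> (N <= n)%N ->
        nrm (u m - u n) < e) ->
    exists l, forall e : R, 0 < e -> exists N, forall n, (N <= n)%N ->
        nrm (u n - l) < e
}.

Definition cpos (R : realType) (A : algType R[i]) (star : A -> A) (x : A) : Prop :=
  exists y, x = star y * y.

Definition cle (R : realType) (A : algType R[i]) (star : A -> A) (x y : A) : Prop :=
  cpos star (y - x).

Definition cRe (R : realType) (A : algType R[i]) (star : A -> A) (S : A) : A :=
  (2%:R^-1 : R[i]) *: (S + star S).

Definition accretive (R : realType) (A : algType R[i]) (star : A -> A) (S : A) : Prop :=
  cpos star (cRe star S).

Definition positive_map (R : realType) (A B : algType R[i])
    (starA : A -> A) (starB : B -> B) (Phi : A -> B) : Prop :=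
  forall x, cpos starA x -> cpos starB (Phi x).

Definition Cab (R : realType) (A : algType R[i]) (star : A -> A)
    (alpha beta : R[i]) (X : A) : A :=
  star (X - alpha *: 1) * (beta *: 1 - X).

(* With c = (alpha + beta)/2 and d = (beta - alpha)/2 one has
   C_{alpha,beta}(X) = (X - c + d)^* (d - (X - c)), whose cross terms are
   skew-adjoint, so Re C_{alpha,beta}(X) = |d|^2 - (X - c)^* (X - c).
   A positive map preserves adjoints (polarization writes a self-adjoint
   element as a difference of two positive ones), hence the "variance"
   Phi(Z^* Z) - Phi(Z)^* Phi(Z) is unchanged by Z |-> Z - c, and the gap in
   the first inequality is Phi(X - c)^* Phi(X - c) >= 0.  The second
   inequality is the accretivity hypothesis, because Phi commutes with Re. *)

From mathcomp Require Import all_boot all_algebra.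
From mathcomp Require Import reals complex.
From mathcomp Require Import ring.
Import GRing.Theory Num.Theory.
Local Open Scope ring_scope.

Set Implicit Arguments.
Unset Strict Implicit.
Unset Printing Implicit Defensive.

Record star_algebra (R : realType) (A : algType R[i]) (star : A -> A) : Prop :=
  StarAlgebra {
    starD : {morph star : x y / x + y};
    starZ : forall (c : R[i]) x, star (c *: x) = c^* *: star x;
    starM : forall x y, star (x * y) = star y * star x;
    starK : involutive star
  }.

Lemma cstar_algebra_star (R : realType) (A : algType R[i]) (star : A -> A)
    (nrm : A -> R) :
  cstar_algebra star nrm -> star_algebra star.
Proof. by case=> *; split. Qed.

Lemma scaleVnK (F : numFieldType) (V : lmodType F) (n : nat) (x : V) :
  (0 < n)%N -> n%:R^-1 *: (x *+ n) = x.
Proof.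
by move=> n_gt0; rewrite -[x *+ n]scaler_nat scalerA mulVf ?scale1r // pnatr_eq0 -lt0n.
Qed.

Section StarAlgebra.
Variables (R : realType) (A : algType R[i]) (star : A -> A).
Hypothesis hs : star_algebra star.

Lemma starN x : star (- x) = - star x.
Proof. by rewrite -scaleN1r (starZ hs) rmorphN1 scaleN1r. Qed.

Lemma starB x y : star (x - y) = star x - star y.
Proof. by rewrite (starD hs) starN. Qed.

Lemma star1 : star 1 = 1.
Proof. by have := starM hs 1 (star 1); rewrite mul1r (starK hs) mul1r => <-. Qed.

Lemma star_scale1 c : star (c *: 1) = c^* *: 1.
Proof. by rewrite (starZ hs) star1. Qed.

Lemma star_mulK x : star (star x * x) = star x * x.
Proof. by rewrite (starM hs) (starK hs). Qed.

Lemma cpos_selfadjoint x : cpos star x -> star x = x.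
Proof. by case=> y ->; apply: star_mulK. Qed.

Lemma selfadjoint_polarization x : star x = x ->
  x = 4%:R^-1 *: (star (x + 1) * (x + 1) - star (x - 1) * (x - 1)).
Proof.
move=> sx; rewrite (starD hs) starB star1 sx -!expr2 sqrrD1 sqrrB1.
rewrite [x ^+ 2 + _ + 1]addrAC [x ^+ 2 - _ + 1]addrAC [x ^+ 2 + 1 + _]addrC.
by rewrite addrKA opprK -mulrnDr scaleVnK.
Qed.

Lemma cRe_selfadjoint x : star (cRe star x) = cRe star x.
Proof.
by rewrite /cRe (starZ hs) (starD hs) (starK hs) fmorphV rmorph_nat addrC.
Qed.

Lemma cRe_id x : star x = x -> cRe star x = x.
Proof. by move=> sx; rewrite /cRe sx -mulr2n scaleVnK. Qed.

Lemma cRe_skew x : star x = - x -> cRe star x = 0.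
Proof. by move=> sx; rewrite /cRe sx subrr scaler0. Qed.

Lemma cReD x y : cRe star (x + y) = cRe star x + cRe star y.
Proof. by rewrite /cRe (starD hs) addrACA scalerDr. Qed.

Lemma cartesian_decomposition x :
  exists h k, [/\ star h = h, star k = k & x = h + 'i *: k].
Proof.
exists (cRe star x), (cRe star (- 'i *: x)); split; rewrite ?cRe_selfadjoint //.
rewrite /cRe (starZ hs) rmorphN /= conjCi opprK [in X in _ + X]scalerA [('i * _)]mulrC.
rewrite -scalerA [in X in _ + X]scalerDr !scalerA mulrN -expr2 sqrCi opprK.
by rewrite scale1r scaleN1r -scalerDr addrACA subrr addr0 -mulr2n scaleVnK.
Qed.

Lemma star_shift_mulE x c :
  star (x - c *: 1) * (x - c *: 1) =
  star x * x - (c *: star x + c^* *: x - (c^* * c) *: 1).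
Proof.
rewrite starB star_scale1 mulrBl !mulrBr -!scalerAl -!scalerAr !mul1r !mulr1.
by rewrite scalerA -addrA -opprD addrA.
Qed.

Lemma Cab_centered alpha beta c d X : c - d = alpha -> c + d = beta ->
  Cab star alpha beta X = star (X - c *: 1 + d *: 1) * (d *: 1 - (X - c *: 1)).
Proof.
move=> <- <-; rewrite /Cab; congr (star _ * _).
  by rewrite scalerBl opprB addrCA addrC.
by rewrite scalerDl opprB addrA (addrC c%:A).
Qed.

Lemma cRe_centered u d :
  cRe star (star (u + d *: 1) * (d *: 1 - u)) = (d^* * d) *: 1 - star u * u.
Proof.
rewrite (starD hs) star_scale1 mulrDl !mulrBr -!scalerAl -!scalerAr !mul1r !mulr1.
rewrite scalerA addrACA [- _ - _]addrC addrACA cReD cRe_skew ?add0r.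
  by rewrite cRe_id // starB star_mulK star_scale1 rmorphM /= conjCK mulrC.
by rewrite starB !(starZ hs) (starK hs) conjCK opprB.
Qed.

Lemma cRe_Cab alpha beta X :
  cRe star (Cab star alpha beta X) =
  (`|beta - alpha| ^+ 2 / 4%:R) *: 1 -
  star (X - ((alpha + beta) / 2%:R) *: 1) * (X - ((alpha + beta) / 2%:R) *: 1).
Proof.
rewrite (@Cab_centered _ _ ((alpha + beta) / 2%:R) ((beta - alpha) / 2%:R)).
- rewrite cRe_centered normCK rmorphM /= fmorphV rmorph_nat.
  by congr (_ *: 1 - _); field.
- by field.
by field.
Qed.
End StarAlgebra.

Section PositiveMap.
Variables (R : realType) (A B : algType R[i]) (sA : A -> A) (sB : B -> B).
Hypotheses (hsA : star_algebra sA) (hsB : star_algebra sB).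
Variable Phi : {linear A -> B}.
Hypothesis Phi_pos : positive_map sA sB Phi.

Lemma positive_map_selfadjoint x : sA x = x -> sB (Phi x) = Phi x.
Proof.
move=> /(selfadjoint_polarization hsA) ->.
rewrite linearZ linearB /= (starZ hsB) (starB hsB) fmorphV rmorph_nat.
by rewrite !(cpos_selfadjoint hsB) //; apply: Phi_pos; eexists.
Qed.

Lemma positive_map_star x : Phi (sA x) = sB (Phi x).
Proof.
have [h [k [sh sk ->]]] := cartesian_decomposition hsA x.
rewrite (starD hsA) (starZ hsA) sh sk !linearD !linearZ /= (starD hsB) (starZ hsB).
by rewrite !positive_map_selfadjoint.
Qed.

Lemma positive_map_cRe x : Phi (cRe sA x) = cRe sB (Phi x).
Proof. by rewrite /cRe linearZ linearD /= positive_map_star. Qed.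

Hypothesis Phi1 : Phi 1 = 1.

Lemma positive_map_variance_shift x c :
  Phi (sA (x - c *: 1) * (x - c *: 1)) - sB (Phi (x - c *: 1)) * Phi (x - c *: 1) =
  Phi (sA x * x) - sB (Phi x) * Phi x.
Proof.
rewrite (star_shift_mulE hsA) [Phi (x - _)]linearB [Phi (_ *: 1)]linearZ /= Phi1.
rewrite (star_shift_mulE hsB) ![Phi (_ - _)]linearB [Phi (_ + _)]linearD.
by rewrite ![Phi (_ *: _)]linearZ /= Phi1 positive_map_star [- (sB _ * _ - _)]opprB subrKA.
Qed.
End PositiveMap.

Theorem lemma3p7 (R : realType) (A B : algType R[i])
    (starA : A -> A) (nrmA : A -> R) (starB : B -> B) (nrmB : B -> R)
    (hA : cstar_algebra starA nrmA) (hB : cstar_algebra starB nrmB)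
    (Phi : {linear A -> B})
    (hPhi_pos : positive_map starA starB Phi) (hPhi_unit : Phi 1 = 1)
    (X : A) (alpha beta : R[i])
    (hacc : accretive starB (Phi (Cab starA alpha beta X))) :
  cle starB (Phi (starA X * X) - starB (Phi X) * Phi X)
      ((`|beta - alpha| ^+ 2 / 4%:R) *: 1 - Phi (cRe starA (Cab starA alpha beta X)))
  /\
  cle starB
      ((`|beta - alpha| ^+ 2 / 4%:R) *: 1 - Phi (cRe starA (Cab starA alpha beta X)))
      ((`|beta - alpha| ^+ 2 / 4%:R) *: 1).
Proof.
have hsA := cstar_algebra_star hA; have hsB := cstar_algebra_star hB.
split; last first.
  rewrite /cle opprB addrCA subrr addr0 (positive_map_cRe hsA hsB hPhi_pos).
  exact hacc.
set gamma := (alpha + beta) / 2%:R.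
rewrite (cRe_Cab hsA) [Phi (_ - _)]linearB [Phi (_ *: 1)]linearZ /= hPhi_unit.
rewrite opprB addrCA subrr addr0 /cle.
rewrite -(positive_map_variance_shift hsA hsB hPhi_pos hPhi_unit X gamma).
by rewrite opprB addrC subrK; exists (Phi (X - gamma *: 1)).
Qed.
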